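(* Let $Q$ be a good dyadic square or a dyadic segment. Then each of the circular arcs bounding $\widehat{\langle Q\rangle}=\Sigma^{-1}(\langle Q\rangle)\subset S^2$ lies on a circle of (Euclidean) diameter at least $1$. (When $Q$ is a dyadic segment, $\widehat{\langle Q\rangle}$ is itself such an arc.)
   Context: $\Sigma(x,y,z)=(x/(1-z),y/(1-z))$ is stereographic projection from $(0,0,1)$ onto $\mathbb{R}^2$. Dyadic segments: segments of the $x$-axis of $\mathbb{R}^2$ obtained from $[0,4]\times\{0\}$ by repeated bisection (including itself). Dyadic squares: obtained from $[-2,2]^2$ by repeatedly cutting into four congruent quarters; a dyadic square is good if it is contained in $[-3/2,3/2]^2$ and has side length at most $1/2$. $\langle Q\rangle$ denotes the solid segment or square. *)

From Stdlib Require Import Reals List.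
Open Scope R_scope.

Definition pt2 : Type := (R * R)%type.
Definition pt3 : Type := (R * R * R)%type.

Definition Sigma (p : pt3) : pt2 :=
  let '(x, y, z) := p in (x / (1 - z), y / (1 - z)).

Definition north : pt3 := (0, 0, 1).

Definition on_S2 (p : pt3) : Prop :=
  let '(x, y, z) := p in x * x + y * y + z * z = 1.

Definition hat (A : pt2 -> Prop) : pt3 -> Prop :=
  fun p => on_S2 p /\ p <> north /\ A (Sigma p).

Definition hseg (a b y0 : R) : pt2 -> Prop :=
  fun q => a <= fst q <= b /\ snd q = y0.
Definition vseg (x0 c d : R) : pt2 -> Prop :=
  fun q => fst q = x0 /\ c <= snd q <= d.

Definition dyadic_segment (a b : R) : Prop :=
  exists n k : nat, (k < 2 ^ n)%nat /\
    a = 4 * INR k / 2 ^ n /\ b = 4 * INR (S k) / 2 ^ n.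

Definition dyadic_square (a b s : R) : Prop :=
  exists n i j : nat, (i < 2 ^ n)%nat /\ (j < 2 ^ n)%nat /\
    s = 4 / 2 ^ n /\ a = -2 + INR i * s /\ b = -2 + INR j * s.

Definition good_square (a b s : R) : Prop :=
  dyadic_square a b s /\
  -3/2 <= a /\ a + s <= 3/2 /\ -3/2 <= b /\ b + s <= 3/2 /\ s <= 1/2.

Definition solid_square (a b s : R) : pt2 -> Prop :=
  fun q => a <= fst q <= a + s /\ b <= snd q <= b + s.

Definition square_sides (a b s : R) : list (pt2 -> Prop) :=
  hseg a (a + s) b :: hseg a (a + s) (b + s) ::
  vseg a b (b + s) :: vseg (a + s) b (b + s) :: nil.

Definition sub3 (p q : pt3) : pt3 :=
  let '(x1, y1, z1) := p in let '(x2, y2, z2) := q in (x1 - x2, y1 - y2, z1 - z2).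
Definition dot3 (p q : pt3) : R :=
  let '(x1, y1, z1) := p in let '(x2, y2, z2) := q in x1 * x2 + y1 * y2 + z1 * z2.

Definition circle (c nv : pt3) (r : R) : pt3 -> Prop :=
  fun x => dot3 (sub3 x c) (sub3 x c) = r * r /\ dot3 (sub3 x c) nv = 0.

Definition lies_on_circle_diam_ge1 (A : pt3 -> Prop) : Prop :=
  exists (c nv : pt3) (r : R), nv <> (0, 0, 0) /\ 0 < r /\ 1 <= 2 * r /\
    (forall x, A x -> circle c nv r x).

(* Sigma^{-1} turns the line alpha x + beta y = gamma into the section of S^2 by the
   plane alpha x + beta y + gamma z = gamma, whose distance to the origin is
   |gamma| / sqrt N with N = alpha^2 + beta^2 + gamma^2; the section is therefore a
   circle of squared radius 1 - gamma^2 / N, and its diameter is at least 1 exactly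
   when gamma^2 <= 3 (alpha^2 + beta^2).  The sides of a good square and the dyadic
   segments lie on horizontal or vertical lines at distance at most 3/2 < sqrt 3
   from the origin. *)
From Stdlib Require Import Reals List Lra.
Open Scope R_scope.

Lemma on_S2_not_north_z (x y z : R) :
  on_S2 (x, y, z) -> (x, y, z) <> north -> 1 - z <> 0.
Proof.
  intros HS Hn Hz; apply Hn; unfold on_S2 in HS.
  assert (z = 1) by lra; subst z.
  assert (x = 0) by nra; assert (y = 0) by nra; subst.
  reflexivity.
Qed.

Lemma sphere_plane_section_circle (nv : pt3) (h : R) (p : pt3) :
  0 < dot3 nv nv -> h * h < dot3 nv nv ->
  on_S2 p -> dot3 p nv = h ->
  circle (let '(a, b, c) := nv in
          (h / dot3 nv nv * a, h / dot3 nv nv * b, h / dot3 nv nv * c))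
         nv (sqrt (1 - h * h / dot3 nv nv)) p.
Proof.
  destruct nv as [[a b] c], p as [[x y] z].
  simpl; intros HN Hh HS Hp; unfold on_S2 in HS; simpl in Hp.
  assert (Hr : 0 <= 1 - h * h / (a * a + b * b + c * c)).
  { replace (1 - _) with ((a * a + b * b + c * c - h * h) / (a * a + b * b + c * c))
      by (field; lra).
    apply Rlt_le, Rdiv_lt_0_compat; lra. }
  unfold circle; simpl; rewrite (sqrt_sqrt _ Hr); split.
  - set (N := a * a + b * b + c * c).
    transitivity ((x * x + y * y + z * z) - 2 * (h / N) * (x * a + y * b + z * c)
                  + h * h / N * (N / N)); [unfold N; field; lra|].
    rewrite HS, Hp; unfold N; field; lra.
  - rewrite <- Hp; field; lra.
Qed.

Lemma hat_line_in_plane (alpha beta gamma : R) (A : pt2 -> Prop) (p : pt3) :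
  (forall q, A q -> alpha * fst q + beta * snd q = gamma) ->
  hat A p -> dot3 p (alpha, beta, gamma) = gamma.
Proof.
  destruct p as [[x y] z]; intros HA [HS [Hn Hq]].
  pose proof (on_S2_not_north_z x y z HS Hn) as Hz.
  specialize (HA _ Hq); simpl in HA |- *.
  transitivity (gamma * (1 - z) + gamma * z); [|ring].
  rewrite <- HA; field; exact Hz.
Qed.

Lemma half_le_sqrt (t : R) : 1 / 4 <= t -> 1 <= 2 * sqrt t.
Proof.
  intros Ht.
  assert (1 / 2 <= sqrt t); [|lra].
  rewrite <- (sqrt_square (1 / 2)) by lra.
  apply sqrt_le_1_alt; lra.
Qed.

Lemma hat_line_lies_on_circle_diam_ge1 (alpha beta gamma : R) (A : pt2 -> Prop) :
  0 < alpha * alpha + beta * beta ->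
  gamma * gamma <= 3 * (alpha * alpha + beta * beta) ->
  (forall q, A q -> alpha * fst q + beta * snd q = gamma) ->
  lies_on_circle_diam_ge1 (hat A).
Proof.
  intros Hab Hg HA.
  set (nv := (alpha, beta, gamma)).
  assert (HN : dot3 nv nv = alpha * alpha + beta * beta + gamma * gamma)
    by (simpl; ring).
  assert (Hr : 1 - gamma * gamma / dot3 nv nv
               = (alpha * alpha + beta * beta) / dot3 nv nv)
    by (rewrite HN; field; nra).
  eexists _, nv, (sqrt (1 - gamma * gamma / dot3 nv nv)); split; [|split; [|split]].
  - intros E; injection E; intros; subst; lra.
  - rewrite Hr; apply sqrt_lt_R0, Rdiv_lt_0_compat; nra.
  - apply half_le_sqrt; rewrite Hr, HN.
    apply Rmult_le_reg_r with (alpha * alpha + beta * beta + gamma * gamma); [nra|].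
    field_simplify; nra.
  - intros p Hp; apply sphere_plane_section_circle.
    + rewrite HN; nra.
    + rewrite HN; nra.
    + exact (proj1 Hp).
    + exact (hat_line_in_plane alpha beta gamma A p HA Hp).
Qed.

Lemma hat_hseg_lies_on_circle_diam_ge1 (a b y0 : R) :
  -3/2 <= y0 <= 3/2 -> lies_on_circle_diam_ge1 (hat (hseg a b y0)).
Proof.
  intros Hy; apply (hat_line_lies_on_circle_diam_ge1 0 1 y0); [lra|nra|].
  intros q [_ Hq]; lra.
Qed.

Lemma hat_vseg_lies_on_circle_diam_ge1 (x0 c d : R) :
  -3/2 <= x0 <= 3/2 -> lies_on_circle_diam_ge1 (hat (vseg x0 c d)).
Proof.
  intros Hx; apply (hat_line_lies_on_circle_diam_ge1 1 0 x0); [lra|nra|].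
  intros q [Hq _]; lra.
Qed.

Lemma good_square_side_pos (a b s : R) : good_square a b s -> 0 < s.
Proof.
  intros [[n [i [j [_ [_ [-> _]]]]]] _].
  apply Rdiv_lt_0_compat; [lra|apply pow_lt; lra].
Qed.

Theorem lemma3p1 :
  (forall a b : R, dyadic_segment a b ->
     lies_on_circle_diam_ge1 (hat (hseg a b 0))) /\
  (forall a b s : R, good_square a b s ->
     forall e, In e (square_sides a b s) ->
       lies_on_circle_diam_ge1 (hat e)).
Proof.
  split.
  - intros a b _; apply hat_hseg_lies_on_circle_diam_ge1; lra.
  - intros a b s Hgood e He.
    pose proof (good_square_side_pos a b s Hgood) as Hs.
    destruct Hgood as [_ [? [? [? [? _]]]]].
    destruct He as [<-|[<-|[<-|[<-|[]]]]].
    + apply hat_hseg_lies_on_circle_diam_ge1; lra.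
    + apply hat_hseg_lies_on_circle_diam_ge1; lra.
    + apply hat_vseg_lies_on_circle_diam_ge1; lra.
    + apply hat_vseg_lies_on_circle_diam_ge1; lra.
Qed.
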